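(* There exists a sequence $S\in\{0,1\}^\omega$ which is FS-deep but not LZ-deep.
   Context: $S\upharpoonright n$ is the length-$n$ prefix of $S$. A finite-state transducer (FST) is $T=(Q,q_0,\delta,\nu)$ with finite state set $Q$, start state $q_0$, $\delta:Q\times\{0,1\}\to Q$, $\nu:Q\times\{0,1\}\to\{0,1\}^*$; $T(\lambda)=\lambda$, $T(xb)=T(x)\nu(\hat\delta(x),b)$; $T$ is an ILFST if $x\mapsto(T(x),\hat\delta(x))$ is injective. FSTs are described by the following fixed binary representation. For $n\ge1$, $\mathrm{bin}(n)$ is the binary representation of $n$ and $\mathrm{string}(n)$ is $\mathrm{bin}(n)$ without its leading 1. For $x=x_1\cdots x_l$, $x^\dagger=x_10x_20\cdots x_{l-1}0x_l1$, $x^\diamond=\overline{(1x)^\dagger}$ (bitwise complement), $d(x)=x_1x_1\cdots x_lx_l$. For an FST with states $q_1,\dots,q_m$, write for $t=2i-1+b$: $(\delta(q_i,b),\nu(q_i,b))=(q_{1+(n_t\bmod m)},\mathrm{string}(n'_t))$; the table is encoded as $\pi=\mathrm{bin}(n_1)^\ddagger\mathrm{string}(n'_1)^\diamond\cdots\mathrm{bin}(n_{2m})^\ddagger\mathrm{string}(n'_{2m})^\diamond$, where $\mathrm{bin}(n_t)^\ddagger$ is empty for a self-loop and $\mathrm{bin}(n_t)^\dagger$ otherwise; $d(\mathrm{bin}(i))01\pi$ describes that FST with start state $q_i$. $|T|$ is the shortest description length, $\mathrm{FST}^{\le k}=\{T:|T|\le k\}$, and $D^k(x)=\min\{|y|:T\in\mathrm{FST}^{\le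 k},T(y)=x\}$. $S$ is FS-deep (infinitely often finite-state deep) if there is $\alpha>0$ such that for every $k$ there is $k'$ with $D^k(S\upharpoonright n)-D^{k'}(S\upharpoonright n)\ge\alpha n$ for infinitely many $n$. LZ denotes the Lempel–Ziv 78 compressor: it parses $x=x_1\cdots x_n$ into phrases, each distinct from all earlier ones (except possibly the last), with $x_i=x_{l(i)}b_i$, $l(i)<i$, $b_i\in\{0,1\}$, $x_0=\lambda$; it outputs $c_{l(1)}b_1\cdots c_{l(n)}b_n$ with $c_j$ a prefix-free encoding of index $j$. $S$ is LZ-deep if there is $\alpha>0$ such that for every ILFST $C$, $|C(S\upharpoonright n)|-|\mathrm{LZ}(S\upharpoonright n)|\ge\alpha n$ for all but finitely many $n$. *)

From Stdlib Require Import Reals.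
From mathcomp Require Import all_boot.

Set Implicit Arguments.
Unset Strict Implicit.
Unset Printing Implicit Defensive.

(* An FST with m = fst_n.+1 states q_1..q_m, represented by 'I_m
   (state q_i is the ordinal i-1). *)
Record FST := mkFST {
  fst_n : nat;
  fst_start : 'I_fst_n.+1;
  fst_delta : 'I_fst_n.+1 -> bool -> 'I_fst_n.+1;
  fst_nu : 'I_fst_n.+1 -> bool -> seq bool }.

Fixpoint fst_out_from (T : FST) (q : 'I_(fst_n T).+1) (x : seq bool)
  : seq bool :=
  match x with
  | [::] => [::]
  | b :: x' => fst_nu q b ++ fst_out_from (fst_delta q b) x'
  end.

Fixpoint fst_state_from (T : FST) (q : 'I_(fst_n T).+1) (x : seq bool)
  : 'I_(fst_n T).+1 :=
  match x with
  | [::] => q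
  | b :: x' => fst_state_from (fst_delta q b) x'
  end.

Definition fst_out (T : FST) (x : seq bool) : seq bool :=
  fst_out_from (fst_start T) x.

Definition fst_state (T : FST) (x : seq bool) : 'I_(fst_n T).+1 :=
  fst_state_from (fst_start T) x.

Definition ILFST (T : FST) : Prop :=
  forall x y : seq bool,
    fst_out T x = fst_out T y -> fst_state T x = fst_state T y -> x = y.

Fixpoint bin_aux (fuel n : nat) : seq bool :=
  match fuel with
  | 0 => [::]
  | f.+1 => if n is 0 then [::] else rcons (bin_aux f n./2) (odd n)
  end.

(* bin n : binary representation of n >= 1 (most significant bit first) *)
Definition bin (n : nat) : seq bool := bin_aux n n.

Definition bstring (n : nat) : seq bool := behead (bin n).

Fixpoint dagger (x : seq bool) : seq bool :=
  match x with
  | [::] => [::]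
  | [:: b] => [:: b; true]
  | b :: x' => b :: false :: dagger x'
  end.

Definition diamond (x : seq bool) : seq bool := map negb (dagger (true :: x)).

Definition dbl (x : seq bool) : seq bool := flatten (map (fun b => [:: b; b]) x).

(* encoding of the table entry t = 2i-1+b, given the chosen number n_t;
   string(n'_t) = nu(q_i,b), so string(n'_t)^diamond = (nu(q_i,b))^diamond *)
Definition enc_entry (T : FST) (ns : 'I_(fst_n T).+1 -> bool -> nat)
    (q : 'I_(fst_n T).+1) (b : bool) : seq bool :=
  (if fst_delta q b == q then [::] else dagger (bin (ns q b)))
    ++ diamond (fst_nu q b).

(* p is a description of T: p = d(bin(i)) 01 pi, where q_i is the start
   state and pi is the table encoding for some admissible choice of the
   numbers n_t (n_t >= 1, q_{1 + (n_t mod m)} = delta(q_i,b)). *)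
Definition describes (p : seq bool) (T : FST) : Prop :=
  exists ns : 'I_(fst_n T).+1 -> bool -> nat,
    (forall q b, fst_delta q b != q ->
        0 < ns q b /\ ns q b %% (fst_n T).+1 = nat_of_ord (fst_delta q b)) /\
    p = dbl (bin (nat_of_ord (fst_start T)).+1) ++ [:: false; true] ++
        flatten [seq enc_entry ns q b | q <- enum 'I_(fst_n T).+1,
                                        b <- [:: false; true]].

Definition FST_le (k : nat) (T : FST) : Prop :=
  exists p, describes p T /\ size p <= k.

(* d = D^k(x)  (D^k(x) is undefined, i.e. infinite, if no such d exists) *)
Definition Dk_is (k : nat) (x : seq bool) (d : nat) : Prop :=
  (exists T y, FST_le k T /\ fst_out T y = x /\ size y = d) /\
  (forall T y, FST_le k T -> fst_out T y = x -> d <= size y).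

(* D^k(x) - D^{k'}(x) >= a, with the convention D = +infinity when
   no description exists. *)
Definition Dgap (k k' : nat) (x : seq bool) (a : R) : Prop :=
  exists d', Dk_is k' x d' /\
    forall d, Dk_is k x d -> Rle a (Rminus (INR d) (INR d')).

Definition prefix (S : nat -> bool) (n : nat) : seq bool := mkseq S n.

Definition FS_deep (S : nat -> bool) : Prop :=
  exists alpha : R, Rlt 0 alpha /\
    forall k, exists k', forall N, exists n, N <= n /\
      Dgap k k' (prefix S n) (Rmult alpha (INR n)).

(* dict = [:: x_0 = lambda; x_1; ...]. Each step takes the shortest
   nonempty prefix of the remaining input not in dict (or the whole
   remaining input if there is none: last phrase), and emits
   (l, b) with phrase = x_l b. *)
Fixpoint lz_aux (fuel : nat) (dict : seq (seq bool)) (x : seq bool)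
  : seq (nat * bool) :=
  match fuel with
  | 0 => [::]
  | f.+1 =>
    if x is [::] then [::] else
    let k := find (fun i => take i.+1 x \notin dict) (iota 0 (size x)) in
    let len := minn k.+1 (size x) in
    (index (take len.-1 x) dict, nth false x len.-1)
      :: lz_aux f (rcons dict (take len x)) (drop len x)
  end.

Definition lz_phrases (x : seq bool) : seq (nat * bool) :=
  lz_aux (size x) [:: [::]] x.

Definition lz_code (j : nat) : seq bool := dagger (bin j.+1).

Definition LZ (x : seq bool) : seq bool :=
  flatten [seq lz_code lb.1 ++ [:: lb.2] | lb <- lz_phrases x].

Definition LZ_deep (S : nat -> bool) : Prop :=
  exists alpha : R, Rlt 0 alpha /\
    forall C : FST, ILFST C ->
      exists N, forall n, N <= n ->
        Rle (Rmult alpha (INR n))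
            (Rminus (INR (size (fst_out C (prefix S n))))
                    (INR (size (LZ (prefix S n))))).

(* Stage s of S appends to the prefix w built so far M = 2(|w|+1) copies of a
   string x of length 2H, where k is the level of s and x is chosen so that no
   transducer with a description of size at most k outputs x, at any offset, on
   an input of at most H bits; such x exist by counting, as these transducers
   and inputs produce fewer than 2^(2H) candidate factors.  Every input
   producing w x^M through such a transducer thus spends more than H bits per
   copy of x, hence at least M H bits, whereas a fixed two-state transducer
   (copy w, then emit x on each 1) needs only 2|w| + M bits: the gap is a
   fixed fraction of the prefix length, and every k is the level of
   infinitely many stages.  Each stage then ends with a run of zeros much
   longer than everything before it, which the lossless transducer counting
   zeros modulo m shrinks by a factor m; since LZ outputs have nonnegative
   length, S is not LZ-deep. *)

From Pilot Require Import Defs.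
From Stdlib Require Import Reals Lra Wf_nat Classical.
From mathcomp Require Import all_boot zify.

Set Implicit Arguments.
Unset Strict Implicit.
Unset Printing Implicit Defensive.

Lemma cat_eq_drop (T : Type) (s1 s2 u w : seq T) :
  s1 ++ s2 = u ++ w -> size s1 <= size u -> s2 = drop (size s1) u ++ w.
Proof.
move=> /(f_equal (drop (size s1))); rewrite drop_size_cat // drop_cat => -> hs.
case: ltnP => // hu; have -> : size s1 = size u by apply/eqP; rewrite eqn_leq hs.
by rewrite subnn drop0 drop_size.
Qed.

Lemma cat_eq_take (T : Type) (s1 s2 u w : seq T) :
  s1 ++ s2 = u ++ w -> size u <= size s1 -> s1 = u ++ take (size s1 - size u) w.
Proof.
move=> /(f_equal (take (size s1))); rewrite take_size_cat // take_cat => e hu.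
by rewrite [LHS]e ltnNge hu.
Qed.

Lemma size_flatten_mem (T : eqType) (ss : seq (seq T)) s :
  s \in ss -> size s <= size (flatten ss).
Proof.
elim: ss => [|t ss IH] //=; rewrite inE size_cat => /orP [/eqP ->|/IH]; lia.
Qed.

Lemma size_flatten_nonempty (T : Type) (ss : seq (seq T)) :
  all (fun s => 0 < size s) ss -> size ss <= size (flatten ss).
Proof. by elim: ss => [|t ss IH] //= /andP [h1 /IH]; rewrite size_cat; lia. Qed.

Lemma size_flatten_nseq (T : Type) (s : seq T) M : size (flatten (nseq M s)) = M * size s.
Proof. by rewrite size_flatten /shape map_nseq sumn_nseq mulnC. Qed.

Lemma nseq_false_true_inj i j (r1 r2 : seq bool) :
  nseq i false ++ true :: r1 = nseq j false ++ true :: r2 -> i = j.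
Proof. by elim: i j => [|i IH] [|j] //= [/IH ->]. Qed.

Lemma size_dagger s : size (dagger s) = (size s).*2.
Proof. by elim: s => [|b [|c s] IH] //=; rewrite IH. Qed.

Section Runs.
Variable T : FST.
Implicit Types (q : 'I_(fst_n T).+1) (y z : seq bool).

Lemma fst_out_from_cat q y z :
  fst_out_from q (y ++ z) = fst_out_from q y ++ fst_out_from (fst_state_from q y) z.
Proof. by elim: y q => [|b y IH] q //=; rewrite IH catA. Qed.

Lemma size_fst_out_from k q z :
  (forall q b, size (fst_nu q b) < k) -> size (fst_out_from q z) <= k * size z.
Proof.
move=> hnu; elim: z q => [|b z IH] q //=; rewrite size_cat mulnS.
by apply: leq_add; [exact: ltnW | exact: IH].
Qed.

Lemma fst_out_from_split q y A : exists y1 y2, [/\ y = y1 ++ y2,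
  size (fst_out_from q y1) <= A &
  y2 = [::] \/ A < size (fst_out_from q (y1 ++ take 1 y2))].
Proof.
elim: y q A => [|b y IH] q A; first by exists [::], [::]; split => //; left.
case: (ltnP A (size (fst_nu q b))) => hA.
  by exists [::], (b :: y); split => //; right; rewrite /= take0 size_cat; lia.
have [y1 [y2 [-> h1 h2]]] := IH (fst_delta q b) (A - size (fst_nu q b)).
exists (b :: y1), y2; split => //=; first by rewrite size_cat; lia.
by case: h2 => [->|h2]; [left | right; rewrite size_cat; lia].
Qed.

Variables (x : seq bool) (H : nat).
Hypothesis x_needs_long_input :
  forall q z a v, fst_out_from q z = a ++ x ++ v -> H < size z.

Lemma fst_out_from_repeat_lower M q y a c :
  fst_out_from q y = a ++ flatten (nseq M x) ++ c -> M * H <= size y.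
Proof.
elim: M q y a => [|M IH] q y a //= hy.
have [y1 [y2 [ey h1 h2]]] := fst_out_from_split q y (size (a ++ x)).
have hy' : fst_out_from q y = (a ++ x) ++ flatten (nseq M x) ++ c by rewrite hy !catA.
(* [y1] and one more bit already output [a ++ x], so hardness makes [y1] long. *)
have long_y1 : H <= size y1.
  set z := y1 ++ take 1 y2.
  have [v hv] : exists v, fst_out_from q z = (a ++ x) ++ v.
    case: h2 => [y2nil|hz].
      by move: ey hy'; rewrite /z y2nil !cats0 => <- ->; eexists.
    move: hy'; rewrite ey -(cat_take_drop 1 y2) catA fst_out_from_cat.
    by move=> /cat_eq_take /(_ (ltnW hz)) ->; eexists.
  have := @x_needs_long_input q z a v; rewrite hv -catA => /(_ erefl).
  by rewrite size_cat size_take; case: ifP; lia.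
move: hy'; rewrite ey fst_out_from_cat => /cat_eq_drop /(_ h1) /IH.
by rewrite size_cat mulSn; lia.
Qed.

End Runs.

Lemma FST_le_bounds k T : FST_le k T ->
  (fst_n T).+1 <= k /\ forall q b, size (@fst_nu T q b) < k.
Proof.
move=> [_ [[ns [_ ->]] hk]].
set es := @flatten (seq bool) _ in hk.
have {}hk : size (flatten es) <= k by move: hk; rewrite !size_cat; lia.
have entry_size q b : size (fst_nu q b) < size (enc_entry ns q b).
  by rewrite /enc_entry size_cat /diamond size_map size_dagger /=; lia.
split.
  have : size es <= size (flatten es).
    apply: size_flatten_nonempty; apply/allP => _ /allpairsP [[q b] [_ _ ->]].
    exact: leq_ltn_trans (entry_size q b).
  rewrite size_allpairs size_enum_ord /=; lia.
move=> q b; apply: leq_trans (entry_size q b) (leq_trans (size_flatten_mem _) hk).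
by apply: allpairs_f; rewrite ?mem_enum ?inE; case: b.
Qed.

Lemma Dk_exists k x : (exists T y, FST_le k T /\ fst_out T y = x) -> exists d, Dk_is k x d.
Proof.
move=> [T [y [hT hy]]].
pose P d := exists T y, FST_le k T /\ fst_out T y = x /\ size y = d.
have [|d [[hd dmin] _]] := @dec_inh_nat_subset_has_unique_least_element P (fun d => classic _).
  by exists (size y), T, y.
by exists d; split => // T' y' hT' hy'; apply/leP/dmin; exists T', y'.
Qed.

Lemma Dgap_of_bounds k k' x c n lo hi : 0 < c ->
  (forall T y, FST_le k T -> fst_out T y = x -> lo <= size y) ->
  (exists T y, [/\ FST_le k' T, fst_out T y = x & size y <= hi]) ->
  n + c * hi <= c * lo -> Dgap k k' x (Rmult (Rinv (INR c)) (INR n)).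
Proof.
move=> c_gt0 hlo [T [y [hT hy hsize]]] hn.
have [d' [hd' d'min]] : exists d', Dk_is k' x d' by apply: Dk_exists; exists T, y.
exists d'; split => // _ [[T'' [y'' [hT'' [hy'' <-]]]] _].
have d'_le := leq_trans (d'min _ _ hT hy) hsize; have lo_le := hlo _ _ hT'' hy''.
have /leP/le_INR : n + c * d' <= c * size y'' by nia.
rewrite plus_INR !mult_INR => h.
have hc : Rlt 0 (INR c) by apply/lt_0_INR/ltP.
apply: (Rmult_le_reg_l (INR c)) => //; rewrite -Rmult_assoc Rinv_r; lra.
Qed.

Definition table := seq (nat * seq bool).

Fixpoint run_table (tab : table) (q : nat) (z : seq bool) : seq bool :=
  if z is b :: z' then
    let e := nth (0, [::]) tab (b + q.*2) in e.2 ++ run_table tab e.1 z'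
  else [::].

Definition table_of K (T : FST) : table :=
  mkseq (fun i => let q := inord i./2 : 'I_(fst_n T).+1 in
                  (nat_of_ord (fst_delta q (odd i)), fst_nu q (odd i))) K.*2.

Lemma run_table_of K T (q : 'I_(fst_n T).+1) z : (fst_n T).+1 <= K ->
  run_table (table_of K T) q z = fst_out_from q z.
Proof.
move=> hK; elim: z q => [|b z IH] q //=.
rewrite nth_mkseq; last by have := ltn_ord q; case: b; lia.
by rewrite half_bit_double oddD odd_double addbF oddb inord_val /= IH.
Qed.

Definition bits n : seq (seq bool) := [seq tval t | t : n.-tuple bool].

Lemma size_bits n : size (bits n) = 2 ^ n.
Proof. by rewrite size_map -cardE card_tuple card_bool. Qed.

Lemma bits_uniq n : uniq (bits n).
Proof. by rewrite map_inj_uniq ?enum_uniq //; exact: val_inj. Qed.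

Lemma mem_bits n s : (s \in bits n) = (size s == n).
Proof.
apply/mapP/idP => [[t _ ->]|hs]; first by rewrite size_tuple.
by exists (Tuple hs); rewrite ?mem_enum.
Qed.

Definition bits_below K : seq (seq bool) := flatten [seq bits i | i <- iota 0 K].

Lemma mem_bits_below K s : (s \in bits_below K) = (size s < K).
Proof.
apply/flattenP/idP => [[_ /mapP [i + ->]]|hs].
  by rewrite mem_iota mem_bits => /andP [_ hi] /eqP ->.
by exists (bits (size s)); rewrite ?mem_bits // map_f // mem_iota.
Qed.

Fixpoint seqs_over (T : Type) (E : seq T) n : seq (seq T) :=
  if n is n'.+1 then [seq e :: s | e <- E, s <- seqs_over E n'] else [:: [::]].

Lemma seqs_over_mem (T : eqType) (E : seq T) s :
  all (mem E) s -> s \in seqs_over E (size s).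
Proof. by elim: s => [|e s IH] //= /andP [he /IH]; exact: allpairs_f. Qed.

Definition tables K : seq table :=
  seqs_over [seq (q, w) | q <- iota 0 K, w <- bits_below K] K.*2.

Lemma table_of_mem K T : FST_le K T -> table_of K T \in tables K.
Proof.
move=> /FST_le_bounds [hn hnu].
rewrite /tables; have -> : K.*2 = size (table_of K T) by rewrite size_mkseq.
apply: seqs_over_mem.
apply/allP => _ /mapP [i _ ->]; apply: allpairs_f.
  by rewrite mem_iota /=; exact: leq_trans (ltn_ord _) hn.
by rewrite mem_bits_below.
Qed.

Definition short_factors K H : seq (seq bool) :=
  [seq take H.*2 (drop zo.2 (run_table tq.1 tq.2 zo.1))
  | tq <- [seq (t, q) | t <- tables K, q <- iota 0 K],
    zo <- [seq (z, o) | z <- bits H, o <- iota 0 (K * H).+1]].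

Lemma lt_mul_exp2 c : c * (4 * c.+1) < 2 ^ (4 * c.+1).
Proof.
set a := 2 * c.+1; have ha : a < 2 ^ a by apply: ltn_expl.
have -> : 4 * c.+1 = a + a by rewrite /a; lia.
rewrite expnD; apply: leq_ltn_trans (ltn_mul ha ha); rewrite /a; nia.
Qed.

Definition hard_len K := 4 * (size (tables K) * K * K.+1).+1.

Lemma size_short_factors_lt K : size (short_factors K (hard_len K)) < 2 ^ (hard_len K).*2.
Proof.
rewrite !size_allpairs size_bits !size_iota -addnn expnD.
have := lt_mul_exp2 (size (tables K) * K * K.+1).
rewrite -/(hard_len K); have : 0 < hard_len K by [].
move: (hard_len K) (size (tables K)) => H C H_gt0 hD.
have hX : 0 < 2 ^ H by rewrite expn_gt0.
apply: leq_ltn_trans (_ : C * K * (2 ^ H * (K.+1 * H)) < 2 ^ H * 2 ^ H).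
  by apply: leq_mul => //; apply: leq_mul => //; rewrite mulSn addnC -addn1 leq_add2l.
by rewrite mulnA [_ * 2 ^ H]mulnC -!mulnA ltn_pmul2l // !mulnA.
Qed.

Lemma exists_hard_string K : exists x,
  (size x == (hard_len K).*2) && (x \notin short_factors K (hard_len K)).
Proof.
have : ~~ all (mem (short_factors K (hard_len K))) (bits (hard_len K).*2).
  apply: contraL (size_short_factors_lt K) => /allP sub.
  by rewrite -leqNgt -(size_bits (hard_len K).*2) uniq_leq_size ?bits_uniq.
by case/allPn => x; rewrite mem_bits => hx hnot; exists x; rewrite hx.
Qed.

Definition hard_string K : seq bool := xchoose (exists_hard_string K).

Lemma hard_string_spec K : size (hard_string K) = (hard_len K).*2 /\
  hard_string K \notin short_factors K (hard_len K).
Proof. by have /andP [/eqP ? ?] := xchooseP (exists_hard_string K). Qed.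

Lemma hard_string_needs_long_input K T : FST_le K T -> forall (q : 'I_(fst_n T).+1) z a v,
  fst_out_from q z = a ++ hard_string K ++ v -> hard_len K < size z.
Proof.
move=> hT q z a v hz; have [hn hnu] := FST_le_bounds hT; have [hx hnot] := hard_string_spec K.
rewrite ltnNge; apply/negP => short.
set H := hard_len K in hx hnot short *; set z' := z ++ nseq (H - size z) false.
have hz' : size z' = H by rewrite size_cat size_nseq; lia.
have [r hr] : exists r, fst_out_from q z' = a ++ hard_string K ++ r.
  by rewrite fst_out_from_cat hz -!catA; eexists.
have ha : size a <= K * H.
  by have := size_fst_out_from q z' hnu; rewrite hr hz' !size_cat; lia.
move/negP: hnot; apply; apply/allpairsP.
exists ((table_of K T, nat_of_ord q), (z', size a)); split.
- by apply: allpairs_f; [exact: table_of_mem | rewrite mem_iota; exact: leq_trans (ltn_ord q) hn].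
- by apply: allpairs_f; rewrite ?mem_bits ?hz' // mem_iota.
- by rewrite run_table_of // hr drop_size_cat // -hx take_size_cat.
Qed.

Definition repeat_delta (q : 'I_2) (b : bool) : 'I_2 :=
  if q == ord0 then (if b then ord0 else ord_max) else ord0.

Definition repeat_nu (x : seq bool) (q : 'I_2) (b : bool) : seq bool :=
  if q == ord0 then (if b then x else [::]) else [:: b].

(* In state 0 a 1 emits [x] and a 0 escapes the next bit, which is copied. *)
Definition repeat_fst (x : seq bool) : FST := mkFST ord0 repeat_delta (repeat_nu x).

Definition escape (w : seq bool) : seq bool := flatten [seq [:: false; b] | b <- w].

Lemma repeat_fst_out x w M :
  fst_out (repeat_fst x) (escape w ++ nseq M true) = w ++ flatten (nseq M x).
Proof.
rewrite /fst_out /=; elim: w => [|b w /= -> //]; by elim: M => [|M /= ->].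
Qed.

Lemma size_escape w : size (escape w) = (size w).*2.
Proof. by elim: w => [|b w /= ->]. Qed.

(* The table number [q + 1] names the target [1 - q] of each non-loop move. *)
Definition repeat_fst_desc (x : seq bool) : seq bool :=
  dbl (bin 1) ++ [:: false; true] ++
  flatten [seq @enc_entry (repeat_fst x) (fun q _ => (q : nat).+1) q b
          | q <- enum 'I_2, b <- [:: false; true]].

Lemma repeat_fst_le x : FST_le (size (repeat_fst_desc x)) (repeat_fst x).
Proof.
exists (repeat_fst_desc x); split => //; exists (fun q _ => (q : nat).+1).
by split => // -[[|[|q]] hq] // [].
Qed.

Definition hard_block (w : seq bool) k : seq bool :=
  w ++ flatten (nseq (size w).+1.*2 (hard_string k)).

Lemma hard_block_gap k w : Dgap k (size (repeat_fst_desc (hard_string k))) (hard_block w k)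
  (Rmult (Rinv (INR 8)) (INR (size (hard_block w k)))).
Proof.
have [hx _] := hard_string_spec k.
apply: (@Dgap_of_bounds _ _ _ _ _ ((size w).+1.*2 * hard_len k) ((size w).*2 + (size w).+1.*2)) => //.
- move=> T y hT; rewrite /fst_out /hard_block -[flatten _]cats0.
  by move=> hy; apply: (fst_out_from_repeat_lower (hard_string_needs_long_input hT) hy).
- exists (repeat_fst (hard_string k)), (escape w ++ nseq (size w).+1.*2 true); split.
  + exact: repeat_fst_le.
  + exact: repeat_fst_out.
  + by rewrite size_cat size_escape size_nseq.
- have : 4 <= hard_len k by rewrite /hard_len leq_pmulr.
  rewrite /hard_block size_cat size_flatten_nseq hx; nia.
Qed.

Section ZeroCompressor.
Variable p : nat.

(* The state counts the pending zeros modulo [p.+1], emitting one 0 per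
   [p.+1] zeros; a 1 read in state [q] is emitted as [1 0^q 1]. *)
Definition zero_delta (q : 'I_p.+1) (b : bool) : 'I_p.+1 :=
  if b || (q == p :> nat) then ord0 else inord q.+1.

Definition zero_nu (q : 'I_p.+1) (b : bool) : seq bool :=
  if b then true :: rcons (nseq q false) true
  else if q == p :> nat then [:: false] else [::].

Definition zero_fst : FST := mkFST ord0 zero_delta zero_nu.

Implicit Types (q : 'I_p.+1) (y z : seq bool).

Lemma zero_delta_succ q : q != p :> nat -> zero_delta q false = q.+1 :> nat.
Proof. by move=> hq; rewrite /zero_delta /= (negbTE hq) inordK //; have := ltn_ord q; lia. Qed.

Lemma zero_fst_silent q y : @fst_out_from zero_fst q y = [::] ->
  @fst_state_from zero_fst q y = q + size y :> nat.
Proof.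
elim: y q => [|[] y IH] q //=; first by rewrite addn0.
case: eqP => // /eqP hq /IH ->.
by rewrite zero_delta_succ //; lia.
Qed.

Lemma zero_fst_out_true q z t : @fst_out_from zero_fst q z = true :: t ->
  exists i r, q <= i /\ t = nseq i false ++ true :: r.
Proof.
elim: z q t => [|[] z IH] q t //=.
  by rewrite -cats1 -catA => -[<-]; exists q; eexists.
case: eqP => // /eqP hq /IH [i [r [hi ->]]].
by exists i, r; move: hi; rewrite zero_delta_succ //; split => //; exact: ltnW.
Qed.

Lemma zero_fst_ILFST : ILFST zero_fst.
Proof.
move=> x y; rewrite /fst_out /fst_state.
elim: x y (fst_start zero_fst) => [|a x IH] [|b y] q //.
- move=> /esym/zero_fst_silent hs /(congr1 (@nat_of_ord _)).
  by rewrite hs /= => ?; exfalso; lia.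
- move=> /zero_fst_silent hs /(congr1 (@nat_of_ord _)).
  by rewrite hs /= => ?; exfalso; lia.
have zero_one x' y' q' : zero_nu q' false ++ @fst_out_from zero_fst (zero_delta q' false) x' <>
                        zero_nu q' true ++ @fst_out_from zero_fst (zero_delta q' true) y'.
  rewrite /zero_nu /=; case: eqP => //= /eqP hq /zero_fst_out_true [i [r []]].
  by rewrite zero_delta_succ // -cats1 -catA => hi /nseq_false_true_inj; lia.
case: (eqVneq a b) => [<- /= /eqP|].
  by rewrite eqseq_cat // eqxx => /eqP e1 e2; rewrite (IH _ _ e1 e2).
by case: a b => [] [] //= _ e; [move/esym: e|move: e] => /zero_one.
Qed.

Lemma size_zero_fst_out q z : size (@fst_out_from zero_fst q z) <= (size z).*2 + q.
Proof.
elim: z q => [|[] z IH] q //=; rewrite size_cat.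
  by have := IH ord0; rewrite /zero_delta /= size_rcons size_nseq; lia.
case: eqP => [hq|/eqP hq] /=.
  by have := IH ord0; rewrite /zero_delta hq eqxx orbT /=; lia.
by have := IH (zero_delta q false); rewrite zero_delta_succ //; lia.
Qed.

Lemma size_zero_fst_out_zeros q Z :
  p.+1 * size (@fst_out_from zero_fst q (nseq Z false)) <= q + Z.
Proof.
elim: Z q => [|Z IH] q /=; rewrite ?muln0 // size_cat.
case: eqP => [hq|/eqP hq] /=.
  by have := IH ord0; rewrite /zero_delta hq eqxx orbT /=; lia.
by have := IH (zero_delta q false); rewrite zero_delta_succ //; lia.
Qed.

End ZeroCompressor.

Lemma not_LZ_deep_of_compressible S :
  (forall m, exists C, ILFST C /\
     forall N, exists n, N <= n /\ m * size (fst_out C (Defs.prefix S n)) <= n) ->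
  ~ LZ_deep S.
Proof.
move=> hS [a [a_gt0 hdeep]].
have [m [hm /ltP m_gt0]] := archimed_cor1 a a_gt0.
have [C [hC hCn]] := hS m; have [N hN] := hdeep C hC.
have [n [hNn hn]] := hCn N.+1; have := hN n (ltnW hNn).
have /le_INR := leP hn; rewrite mult_INR.
have := pos_INR (size (LZ (Defs.prefix S n))).
have hn0 : Rlt 0 (INR n) by apply/lt_0_INR/ltP; lia.
have hm0 : Rlt 0 (INR m) by apply/lt_0_INR/ltP.
have : Rlt 1 (a * INR m).
  by rewrite -(Rinv_l (INR m)); [apply: Rmult_lt_compat_r | apply: not_0_INR; lia].
nra.
Qed.

Definition level s := s - Nat.sqrt s * Nat.sqrt s.

Lemma level_sqr_add j k : k <= j.*2 -> level (j * j + k) = k.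
Proof.
move=> hk; rewrite /level (_ : Nat.sqrt _ = j) ?addKn //.
by apply: Nat.sqrt_unique; lia.
Qed.

Definition pad_zeros s (u : seq bool) : seq bool := u ++ nseq (s * (size u).+1) false.

Fixpoint stage s : seq bool :=
  if s is s'.+1 then pad_zeros s (hard_block (stage s') (level s')) else [::].

Definition Sseq (i : nat) : bool := nth false (stage i.+1) i.

Lemma stage_size s : s <= size (stage s).
Proof. by case: s => [|s] //=; rewrite size_cat size_nseq; nia. Qed.

Lemma stage_prefix s t : s <= t -> exists e, stage t = stage s ++ e.
Proof.
elim: t => [|t IH]; first by rewrite leqn0 => /eqP ->; exists [::].
rewrite leq_eqVlt => /orP [/eqP ->|/IH [e he]]; first by exists [::]; rewrite cats0.
by rewrite /= /pad_zeros /hard_block he -!catA; eexists.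
Qed.

Lemma prefix_Sseq n s : n <= size (stage s) -> Defs.prefix Sseq n = take n (stage s).
Proof.
move=> hn; apply: (@eq_from_nth _ false); first by rewrite size_mkseq size_take_min; lia.
move=> i; rewrite size_mkseq => hi; rewrite nth_mkseq // nth_take // /Sseq.
have [his|hsi] := leqP i.+1 s.
  have [e ->] := stage_prefix his; rewrite nth_cat; have := stage_size i.+1; case: ifP => //; lia.
have [e ->] := stage_prefix (ltnW hsi); rewrite nth_cat; case: ifP => //; lia.
Qed.

Lemma Sseq_FS_deep : FS_deep Sseq.
Proof.
exists (Rinv (INR 8)); split; first by apply/Rinv_0_lt_compat/lt_0_INR/ltP.
move=> k; exists (size (repeat_fst_desc (hard_string k))) => N.
set s := (N + k) * (N + k) + k; set u := hard_block (stage s) k.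
have hu : Defs.prefix Sseq (size u) = u.
  rewrite (@prefix_Sseq _ s.+1) /= ?level_sqr_add ?take_size_cat ?size_cat ?leq_addr //; lia.
exists (size u); rewrite hu; split; last exact: hard_block_gap.
have := stage_size s; rewrite /u /hard_block size_cat /s; nia.
Qed.

Lemma zero_fst_stage p s : p.*2 <= s ->
  p.+1 * size (fst_out (zero_fst p) (stage s.+1)) <= (size (stage s.+1)).*2.
Proof.
move=> hs; rewrite /= /pad_zeros /fst_out.
move: (hard_block _ _) => u.
(* Naming the run length keeps [size_cat] from unfolding the run of zeros. *)
have [Z hZ] : exists Z, s.+1 * (size u).+1 = Z by eexists.
rewrite hZ fst_out_from_cat !size_cat size_nseq; set q := fst_state_from _ u.
have /= q_le := ltn_ord q; have /= := @size_zero_fst_out p ord0 u.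
have := @size_zero_fst_out_zeros p q Z.
nia.
Qed.

Lemma Sseq_not_LZ_deep : ~ LZ_deep Sseq.
Proof.
apply: not_LZ_deep_of_compressible => m.
exists (zero_fst m.*2); split; first exact: zero_fst_ILFST.
move=> N; set s := N + 4 * m; exists (size (stage s.+1)); split.
  by have := stage_size s.+1; lia.
rewrite (@prefix_Sseq _ s.+1) // take_size.
have := @zero_fst_stage m.*2 s; rewrite /s; nia.
Qed.

Theorem mainTheorem8 : exists S : nat -> bool, FS_deep S /\ ~ LZ_deep S.
Proof. by exists Sseq; split; [exact: Sseq_FS_deep | exact: Sseq_not_LZ_deep]. Qed.
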